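(* Let $a>0$, let $v:\mathbb{R}\to[v_0,\infty)$ be continuously differentiable with $v_0>0$, fix $r>a/v_0$, and let $C=C([-r,0],\mathbb{R})$ with the norm $|\phi|=\max_{-r\le t\le 0}|\phi(t)|$. For $\phi\in C$ let $\delta(\phi)\in(0,r)$ be the unique solution $u$ of $a=\int_{-u}^0 v(\phi(s))\,ds$. Then the map $\delta:C\to(0,r)$ is continuously differentiable with $$D\delta(\phi)\chi=-\frac{\int_{-\delta(\phi)}^0 v'(\phi(s))\chi(s)\,ds}{v(\phi(-\delta(\phi)))}\qquad(\chi\in C).$$ Moreover, if $\phi(s)=\xi$ for all $s\in[-r,0]$, then $\delta(\phi)=a/v(\xi)$ and $$D\delta(\phi)\chi=-\frac{v'(\xi)}{v(\xi)}\int_{-a/v(\xi)}^0\chi(s)\,ds.$$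
   Context: Since $v\ge v_0>0$ is continuous, for every $\phi\in C$ the equation $a=\int_{-u}^0 v(\phi(s))\,ds$ has a unique solution $u\in(0,r)$; this defines $\delta$. *)

From Stdlib Require Import Reals.
From Coquelicot Require Import Coquelicot.
Open Scope R_scope.

(* Elements of C = C([-r,0],R) are represented by functions phi : R -> R
   whose restriction to [-r,0] is continuous; values outside [-r,0]
   play no role. *)
Definition in_C (r : R) (phi : R -> R) : Prop :=
  forall t, -r <= t <= 0 ->
    forall eps, 0 < eps -> exists d, 0 < d /\
      forall s, -r <= s <= 0 -> Rabs (s - t) < d -> Rabs (phi s - phi t) < eps.

(* The max norm |phi| = max_{-r <= t <= 0} |phi(t)| (a sup, attained for
   continuous phi). *)
Definition normC (r : R) (phi : R -> R) : R :=
  real (Lub_Rbar (fun y => exists t, -r <= t <= 0 /\ y = Rabs (phi t))).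

Definition Ddelta (v v' : R -> R) (delta : (R -> R) -> R)
    (phi chi : R -> R) : R :=
  - RInt (fun s => v' (phi s) * chi s) (- delta phi) 0 / v (phi (- delta phi)).

From Stdlib Require Import Reals Lra.
From Coquelicot Require Import Coquelicot.
Open Scope R_scope.

(* Subtracting the defining equations of delta phi and delta psi gives
     (delta psi - delta phi) v(phi(-delta phi)) + int_{-delta phi}^0 v'(phi)(psi - phi)
       = - (R1 + R2),
   where R1 integrates the first-order Taylor remainder of v between phi and psi
   over [-delta phi, 0] and R2 = int_{-delta psi}^{-delta phi} (v(psi) - v(phi(-delta phi))).
   Since v >= v0, the same subtraction shows that delta is locally Lipschitz, and
   uniform continuity of v' on a compact neighbourhood of the range of phi then
   makes R1 and R2 o(|psi - phi|); the same estimates give continuity of the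
   derivative in operator norm. The hypotheses a > 0 and r > a / v0 only ensure
   that delta exists: the proof uses nothing but its specification. *)

Definition clamp (r s : R) : R := Rmax (-r) (Rmin 0 s).

Lemma clamp_mem r s : 0 <= r -> -r <= clamp r s <= 0.
Proof. intros; unfold clamp, Rmax, Rmin; repeat destruct Rle_dec; lra. Qed.

Lemma clamp_id r s : -r <= s <= 0 -> clamp r s = s.
Proof. intros; unfold clamp, Rmax, Rmin; repeat destruct Rle_dec; lra. Qed.

Lemma clamp_dist r s t : 0 <= r -> Rabs (clamp r s - clamp r t) <= Rabs (s - t).
Proof.
  intros; unfold clamp, Rmax, Rmin; repeat destruct Rle_dec;
  unfold Rabs; repeat destruct Rcase_abs; lra.
Qed.

(* Precomposing with the retraction [clamp r] of R onto [-r,0] turns an element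
   of C into a function continuous on all of R, to which Coquelicot's
   continuity and integrability lemmas apply. *)
Definition continuous_clamped (r : R) (f : R -> R) : Prop :=
  forall x, continuous (fun s => f (clamp r s)) x.

Lemma in_C_continuous_clamped r f : 0 <= r -> in_C r f -> continuous_clamped r f.
Proof.
  intros Hr Hf x. apply continuity_pt_filterlim.
  intros eps Heps.
  destruct (Hf (clamp r x) (clamp_mem r x Hr) eps Heps) as [d [Hd Hclose]].
  exists d; split; [exact Hd|]. intros s [_ Hs]. simpl in *. unfold R_dist in *.
  apply Hclose; [apply clamp_mem; exact Hr|].
  eapply Rle_lt_trans; [apply clamp_dist; exact Hr | exact Hs].
Qed.

Lemma continuous_clamped_in_C r f : continuous_clamped r f -> in_C r f.
Proof.
  intros Hf t Ht eps Heps.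
  destruct (proj2 (continuity_pt_filterlim _ t) (Hf t) eps Heps) as [d [Hd Hclose]].
  exists d; split; [exact Hd|]. intros s Hs Hst.
  destruct (Req_dec s t) as [->|Hne].
  - rewrite Rminus_eq_0, Rabs_R0; exact Heps.
  - specialize (Hclose s). simpl in Hclose. unfold R_dist in Hclose.
    rewrite !clamp_id in Hclose by assumption.
    apply Hclose. repeat split; auto.
Qed.

Lemma continuous_clamped_ex_RInt r f a b : continuous_clamped r f ->
  -r <= a <= 0 -> -r <= b <= 0 -> ex_RInt f a b.
Proof.
  intros Hf Ha Hb.
  apply ex_RInt_ext with (fun s => f (clamp r s)).
  - intros x Hx. rewrite clamp_id; [reflexivity|].
    revert Hx; unfold Rmin, Rmax; destruct Rle_dec; lra.
  - apply (ex_RInt_continuous (V := R_CompleteNormedModule)); intros; apply Hf.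
Qed.

Lemma continuous_clamped_plus r f g : continuous_clamped r f -> continuous_clamped r g ->
  continuous_clamped r (fun s => f s + g s).
Proof. intros Hf Hg x. exact (continuous_plus _ _ x (Hf x) (Hg x)). Qed.

Lemma continuous_clamped_minus r f g : continuous_clamped r f -> continuous_clamped r g ->
  continuous_clamped r (fun s => f s - g s).
Proof. intros Hf Hg x. exact (continuous_minus _ _ x (Hf x) (Hg x)). Qed.

Lemma continuous_clamped_mult r f g : continuous_clamped r f -> continuous_clamped r g ->
  continuous_clamped r (fun s => f s * g s).
Proof. intros Hf Hg x. exact (continuous_mult _ _ x (Hf x) (Hg x)). Qed.

Lemma continuous_clamped_comp r F f : (forall y, continuous F y) -> continuous_clamped r f ->
  continuous_clamped r (fun s => F (f s)).
Proof. intros HF Hf x. exact (continuous_comp _ F x (Hf x) (HF _)). Qed.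

Lemma continuous_clamped_const r c : continuous_clamped r (fun _ => c).
Proof. intros x. apply continuous_const. Qed.

Lemma abs_le_normC r f t : continuous_clamped r f -> -r <= t <= 0 ->
  Rabs (f t) <= normC r f.
Proof.
  intros Hf Ht.
  assert (Hcont : forall c, -r <= c <= 0 -> continuity_pt (fun s => Rabs (f (clamp r s))) c).
  { intros c _. apply continuity_pt_filterlim.
    exact (continuous_comp _ Rabs c (Hf c) (continuous_Rabs _)). }
  destruct (continuity_ab_maj _ (-r) 0 ltac:(lra) Hcont) as [m [Hmax _]].
  unfold normC.
  set (E := fun y => exists t, -r <= t <= 0 /\ y = Rabs (f t)).
  destruct (Lub_Rbar_correct E) as [Hub Hlub].
  assert (Hge : Rbar_le (Rabs (f t)) (Lub_Rbar E)) by (apply Hub; exists t; auto).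
  assert (Hle : Rbar_le (Lub_Rbar E) (Rabs (f (clamp r m)))).
  { apply Hlub. intros y [s [Hs ->]]. simpl.
    specialize (Hmax s Hs). rewrite clamp_id in Hmax; assumption. }
  destruct (Lub_Rbar E); simpl in *; tauto.
Qed.

Lemma normC_ge0 r f : 0 <= r -> continuous_clamped r f -> 0 <= normC r f.
Proof.
  intros Hr Hf. apply Rle_trans with (Rabs (f 0)); [apply Rabs_pos|].
  apply abs_le_normC; [exact Hf | lra].
Qed.

Lemma normC_ext r f g : (forall t, -r <= t <= 0 -> f t = g t) -> normC r f = normC r g.
Proof.
  intros H. unfold normC. f_equal. apply Lub_Rbar_eqset.
  intros y; split; intros [t [Ht ->]]; exists t; split; auto; rewrite H; auto.
Qed.

Lemma between_mem lo hi x y c : lo <= x <= hi -> lo <= y <= hi ->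
  Rmin x y <= c <= Rmax x y -> lo <= c <= hi.
Proof. unfold Rmin, Rmax; destruct Rle_dec; lra. Qed.

Lemma between_dist x y c : Rmin x y <= c <= Rmax x y -> Rabs (c - y) <= Rabs (x - y).
Proof. unfold Rmin, Rmax, Rabs; destruct Rle_dec; repeat destruct Rcase_abs; lra. Qed.

Lemma abs_div_le x X V m : 0 < m -> m <= V -> Rabs x <= X -> Rabs (x / V) <= X / m.
Proof.
  intros Hm HV Hx. unfold Rdiv. rewrite Rabs_mult, Rabs_inv, (Rabs_right V) by lra.
  apply Rmult_le_compat; [apply Rabs_pos | left; apply Rinv_0_lt_compat; lra | exact Hx |].
  apply Rinv_le_contravar; lra.
Qed.

Lemma abs_RInt_le_dist f a b M : ex_RInt f a b ->
  (forall t, Rmin a b <= t <= Rmax a b -> Rabs (f t) <= M) ->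
  Rabs (RInt f a b) <= Rabs (b - a) * M.
Proof.
  intros Hf HM. exact (norm_RInt_le_const_abs f a b _ M HM (RInt_correct f a b Hf)).
Qed.

Lemma dist_le_abs_RInt f a b m : ex_RInt f a b -> 0 <= m ->
  (forall t, Rmin a b <= t <= Rmax a b -> m <= f t) ->
  Rabs (b - a) * m <= Rabs (RInt f a b).
Proof.
  intros Hf Hm Hlow.
  assert (Hordered : forall a b, a <= b -> ex_RInt f a b ->
            (forall t, a <= t <= b -> m <= f t) -> (b - a) * m <= RInt f a b).
  { intros a' b' Hab Hf' Hlow'.
    replace ((b' - a') * m) with (RInt (fun _ => m) a' b')
      by (rewrite RInt_const; reflexivity).
    apply RInt_le; [exact Hab | apply ex_RInt_const | exact Hf' |].
    intros x Hx; apply Hlow'; lra. }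
  destruct (Rle_dec a b) as [Hab|Hab].
  - rewrite Rabs_right by lra. eapply Rle_trans; [|apply Rle_abs].
    apply Hordered; [exact Hab | exact Hf |].
    intros t Ht; apply Hlow. rewrite Rmin_left, Rmax_right; lra.
  - rewrite <- (opp_RInt_swap f b a), Rabs_minus_sym by (apply ex_RInt_swap; exact Hf).
    change (Rabs (a - b) * m <= Rabs (- RInt f b a)). rewrite Rabs_Ropp, Rabs_right by lra.
    eapply Rle_trans; [|apply Rle_abs].
    apply Hordered; [lra | apply ex_RInt_swap; exact Hf |].
    intros t Ht; apply Hlow. rewrite Rmin_right, Rmax_left; lra.
Qed.

Lemma abs_bound_nonneg F M L y : (forall x, -M <= x <= M -> Rabs (F x) <= L) ->
  -M <= y <= M -> 0 <= L.
Proof. intros HF Hy. apply Rle_trans with (Rabs (F y)); [apply Rabs_pos | apply HF, Hy]. Qed.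

Lemma uniform_continuity_segment F M eps : (forall y, continuous F y) -> 0 < eps ->
  exists d, 0 < d /\ forall x y, -M <= x <= M -> -M <= y <= M -> Rabs (x - y) < d ->
    Rabs (F x - F y) < eps.
Proof.
  intros HF Heps.
  destruct (Heine F (fun c => -M <= c <= M) (compact_P3 (-M) M)
             (fun x _ => proj2 (continuity_pt_filterlim F x) (HF x)) (mkposreal eps Heps))
    as [d Hd].
  exists d; split; [apply cond_pos|]. intros; apply Hd; auto.
Qed.

Lemma bounded_segment F M : (forall y, continuous F y) ->
  exists L, forall x, -M <= x <= M -> Rabs (F x) <= L.
Proof.
  intros HF. destruct (Rle_dec (-M) M) as [HM|HM].
  - assert (Hcont : forall c, -M <= c <= M -> continuity_pt (fun s => Rabs (F s)) c).
    { intros c _. apply continuity_pt_filterlim.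
      exact (continuous_comp _ Rabs c (HF c) (continuous_Rabs _)). }
    destruct (continuity_ab_maj _ (-M) M HM Hcont) as [m [Hmax _]].
    exists (Rabs (F m)); exact Hmax.
  - exists 0; intros; lra.
Qed.

Section MeanValue.

Variables (f f' : R -> R).
Hypothesis f_derive : forall x, is_derive f x (f' x).

Lemma MVT_between x y : exists c, Rmin x y <= c <= Rmax x y /\ f x - f y = f' c * (x - y).
Proof.
  rewrite Rmin_comm, Rmax_comm. apply (MVT_gen f y x f').
  - intros; apply f_derive.
  - intros z _. apply continuity_pt_filterlim.
    apply (ex_derive_continuous (K := R_AbsRing) (V := R_NormedModule)).
    exists (f' z); apply f_derive.
Qed.

Lemma lipschitz_of_derive_bound x y L :
  (forall c, Rmin x y <= c <= Rmax x y -> Rabs (f' c) <= L) ->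
  Rabs (f x - f y) <= L * Rabs (x - y).
Proof.
  intros HL. destruct (MVT_between x y) as [c [Hc ->]].
  rewrite Rabs_mult. apply Rmult_le_compat_r; [apply Rabs_pos | apply HL, Hc].
Qed.

Lemma taylor1_remainder_le x y e :
  (forall c, Rmin x y <= c <= Rmax x y -> Rabs (f' c - f' y) <= e) ->
  Rabs (f x - f y - f' y * (x - y)) <= e * Rabs (x - y).
Proof.
  intros He. destruct (MVT_between x y) as [c [Hc ->]].
  replace (f' c * (x - y) - f' y * (x - y)) with ((f' c - f' y) * (x - y)) by ring.
  rewrite Rabs_mult. apply Rmult_le_compat_r; [apply Rabs_pos | apply He, Hc].
Qed.

End MeanValue.

Definition near_C (r : R) (phi : R -> R) (P : (R -> R) -> Prop) : Prop :=
  exists d, 0 < d /\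
    forall psi, in_C r psi -> normC r (fun s => psi s - phi s) < d -> P psi.

Lemma near_C_ball r phi d : 0 < d -> near_C r phi (fun psi => normC r (fun s => psi s - phi s) < d).
Proof. intros Hd; exists d; auto. Qed.

Lemma near_C_and r phi P Q : near_C r phi P -> near_C r phi Q ->
  near_C r phi (fun psi => P psi /\ Q psi).
Proof.
  intros [d1 [Hd1 HP]] [d2 [Hd2 HQ]]. exists (Rmin d1 d2); split; [apply Rmin_pos; assumption|].
  intros psi Hpsi Hn. apply Rmin_Rgt in Hn as [Hn1 Hn2]. auto.
Qed.

Lemma near_C_impl r phi (P Q : (R -> R) -> Prop) : near_C r phi P ->
  (forall psi, in_C r psi -> P psi -> Q psi) -> near_C r phi Q.
Proof. intros [d [Hd HP]] HPQ. exists d; auto. Qed.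

Section StateDependentDelay.

Variables (a v0 r : R) (v v' : R -> R) (delta : (R -> R) -> R).
Hypothesis v0_pos : 0 < v0.
Hypothesis v_ge_v0 : forall x, v0 <= v x.
Hypothesis v_derive : forall x, is_derive v x (v' x).
Hypothesis v'_continuous : forall x, continuous v' x.
Hypothesis delta_spec : forall phi, in_C r phi ->
  0 < delta phi < r /\ a = RInt (fun s => v (phi s)) (- delta phi) 0.

Lemma r_pos : 0 < r.
Proof.
  assert (H0 : in_C r (fun _ => 0)).
  { intros t _ eps Heps. exists 1; split; [lra|].
    intros; rewrite Rminus_eq_0, Rabs_R0; exact Heps. }
  destruct (delta_spec _ H0); lra.
Qed.

Lemma in_C_clamped f : in_C r f -> continuous_clamped r f.
Proof. apply in_C_continuous_clamped. left; exact r_pos. Qed.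

Let ex_RInt_C := continuous_clamped_ex_RInt r.

Lemma abs_sub_le_normC f g t : in_C r f -> in_C r g -> -r <= t <= 0 ->
  Rabs (g t - f t) <= normC r (fun s => g s - f s).
Proof.
  intros Hf Hg Ht. apply (abs_le_normC r (fun s => g s - f s)); [|exact Ht].
  apply continuous_clamped_minus; apply in_C_clamped; assumption.
Qed.

Lemma v_continuous x : continuous v x.
Proof.
  apply (ex_derive_continuous (K := R_AbsRing) (V := R_NormedModule)).
  exists (v' x); apply v_derive.
Qed.

Lemma delta_mem phi : in_C r phi -> -r <= - delta phi <= 0.
Proof. intros Hphi; destruct (delta_spec phi Hphi); lra. Qed.

Lemma zero_mem : -r <= 0 <= 0.
Proof. pose proof r_pos; lra. Qed.

Lemma delay_interval_mem phi s : in_C r phi ->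
  Rmin (- delta phi) 0 <= s <= Rmax (- delta phi) 0 -> -r <= s <= 0.
Proof. intros Hphi. apply between_mem; [apply delta_mem, Hphi | apply zero_mem]. Qed.

Lemma RInt_delta_gap phi psi : in_C r phi -> in_C r psi ->
  RInt (fun s => v (psi s)) (- delta psi) (- delta phi)
  = - RInt (fun s => v (psi s) - v (phi s)) (- delta phi) 0.
Proof.
  intros Hphi Hpsi.
  destruct (delta_spec phi Hphi) as [_ Hint_phi], (delta_spec psi Hpsi) as [_ Hint_psi].
  pose proof (delta_mem phi Hphi); pose proof (delta_mem psi Hpsi); pose proof zero_mem.
  assert (Cvphi := continuous_clamped_comp r v phi v_continuous (in_C_clamped phi Hphi)).
  assert (Cvpsi := continuous_clamped_comp r v psi v_continuous (in_C_clamped psi Hpsi)).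
  assert (Hdiff : RInt (fun s => v (psi s) - v (phi s)) (- delta phi) 0 =
     RInt (fun s => v (psi s)) (- delta phi) 0 - RInt (fun s => v (phi s)) (- delta phi) 0)
    by (apply (RInt_minus (V := R_CompleteNormedModule)); apply ex_RInt_C; auto).
  assert (Hsplit : RInt (fun s => v (psi s)) (- delta psi) (- delta phi) +
                   RInt (fun s => v (psi s)) (- delta phi) 0 =
                   RInt (fun s => v (psi s)) (- delta psi) 0)
    by (apply (RInt_Chasles (V := R_CompleteNormedModule)); apply ex_RInt_C; auto).
  lra.
Qed.

Lemma delta_lipschitz M L phi psi : in_C r phi -> in_C r psi ->
  (forall x, -M <= x <= M -> Rabs (v' x) <= L) ->
  (forall t, -r <= t <= 0 -> -M <= phi t <= M /\ -M <= psi t <= M) ->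
  Rabs (delta psi - delta phi) <= r * L / v0 * normC r (fun s => psi s - phi s).
Proof.
  intros Hphi Hpsi HL Hbd.
  destruct (delta_spec phi Hphi) as [Hd_phi _].
  pose proof (delta_mem phi Hphi); pose proof (delta_mem psi Hpsi); pose proof zero_mem.
  assert (Cphi := in_C_clamped phi Hphi); assert (Cpsi := in_C_clamped psi Hpsi).
  assert (Ch := continuous_clamped_minus r _ _ Cpsi Cphi).
  set (n := normC r (fun s => psi s - phi s)).
  assert (Hn0 : 0 <= n) by (apply normC_ge0; [lra | exact Ch]).
  assert (HL0 : 0 <= L) by (apply (abs_bound_nonneg v' M L (phi 0) HL), Hbd, zero_mem).
  assert (Hlow : Rabs (delta psi - delta phi) * v0 <=
                 Rabs (RInt (fun s => v (psi s)) (- delta psi) (- delta phi))).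
  { replace (delta psi - delta phi) with (- delta phi - - delta psi) by ring.
    apply dist_le_abs_RInt; [| lra | intros; apply v_ge_v0].
    apply ex_RInt_C; [apply continuous_clamped_comp; [exact v_continuous | exact Cpsi] | |];
    assumption. }
  assert (Hup : Rabs (RInt (fun s => v (psi s) - v (phi s)) (- delta phi) 0)
                <= Rabs (0 - - delta phi) * (L * n)).
  { apply abs_RInt_le_dist.
    - apply ex_RInt_C; [apply continuous_clamped_minus; apply continuous_clamped_comp;
                        auto using v_continuous | |]; assumption.
    - intros t Ht. pose proof (delay_interval_mem phi t Hphi Ht) as Ht'.
      destruct (Hbd t Ht').
      eapply Rle_trans.
      + apply (lipschitz_of_derive_bound v v' v_derive). intros c Hc.
        apply HL. apply (between_mem _ _ (psi t) (phi t) c); tauto.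
      + apply Rmult_le_compat_l; [exact HL0|].
        apply abs_sub_le_normC; assumption. }
  rewrite RInt_delta_gap, Rabs_Ropp in Hlow by assumption.
  rewrite (Rabs_right (0 - - delta phi)) in Hup by lra.
  apply Rmult_le_reg_r with v0; [exact v0_pos|].
  replace (r * L / v0 * n * v0) with (r * (L * n)) by (field; lra).
  assert (delta phi * (L * n) <= r * (L * n)) by (apply Rmult_le_compat_r; nra).
  lra.
Qed.

Lemma abs_RInt_v'_mul_le M L g chi s t : in_C r g -> in_C r chi ->
  (forall x, -M <= x <= M -> Rabs (v' x) <= L) ->
  (forall u, -r <= u <= 0 -> -M <= g u <= M) ->
  -r <= s <= 0 -> -r <= t <= 0 ->
  Rabs (RInt (fun u => v' (g u) * chi u) s t) <= Rabs (t - s) * (L * normC r chi).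
Proof.
  intros Hg Hchi HL Hbd Hs Ht.
  apply abs_RInt_le_dist.
  - apply ex_RInt_C; [|assumption|assumption].
    apply continuous_clamped_mult; [apply continuous_clamped_comp; [exact v'_continuous|] |];
    apply in_C_clamped; assumption.
  - intros u Hu. assert (Hu' : -r <= u <= 0) by (apply (between_mem _ _ s t u); assumption).
    rewrite Rabs_mult. apply Rmult_le_compat; try apply Rabs_pos.
    + apply HL, Hbd, Hu'.
    + apply abs_le_normC; [apply in_C_clamped|]; assumption.
Qed.

Lemma abs_Ddelta_numerator_le M L phi chi : in_C r phi -> in_C r chi ->
  (forall x, -M <= x <= M -> Rabs (v' x) <= L) ->
  (forall t, -r <= t <= 0 -> -M <= phi t <= M) ->
  Rabs (RInt (fun s => v' (phi s) * chi s) (- delta phi) 0) <= r * (L * normC r chi).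
Proof.
  intros Hphi Hchi HL Hbd.
  destruct (delta_spec phi Hphi) as [Hd _]; pose proof (delta_mem phi Hphi).
  assert (HL0 : 0 <= L) by (apply (abs_bound_nonneg v' M L (phi 0) HL), Hbd, zero_mem).
  assert (HN0 : 0 <= normC r chi) by (apply normC_ge0; [lra | apply in_C_clamped, Hchi]).
  eapply Rle_trans; [apply (abs_RInt_v'_mul_le M); auto using zero_mem|].
  rewrite Rabs_right by lra. apply Rmult_le_compat_r; [nra | lra].
Qed.

Lemma Ddelta_abs_le M L phi chi : in_C r phi -> in_C r chi ->
  (forall x, -M <= x <= M -> Rabs (v' x) <= L) ->
  (forall t, -r <= t <= 0 -> -M <= phi t <= M) ->
  Rabs (Ddelta v v' delta phi chi) <= r * L / v0 * normC r chi.
Proof.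
  intros Hphi Hchi HL Hbd.
  unfold Ddelta. unfold Rdiv at 1. rewrite Ropp_mult_distr_l_reverse, Rabs_Ropp.
  replace (r * L / v0 * normC r chi) with (r * (L * normC r chi) / v0) by (field; lra).
  apply abs_div_le; [exact v0_pos | apply v_ge_v0 |].
  apply (abs_Ddelta_numerator_le M); assumption.
Qed.

Lemma Ddelta_ext phi chi1 chi2 : in_C r phi -> (forall s, -r <= s <= 0 -> chi1 s = chi2 s) ->
  Ddelta v v' delta phi chi1 = Ddelta v v' delta phi chi2.
Proof.
  intros Hphi Heq. unfold Ddelta. do 2 f_equal.
  apply RInt_ext. intros s Hs. rewrite Heq; [reflexivity|].
  apply (delay_interval_mem phi s Hphi). split; apply Rlt_le; apply Hs.
Qed.

Lemma delta_increment phi psi : in_C r phi -> in_C r psi ->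
  (delta psi - delta phi) * v (phi (- delta phi))
    + RInt (fun s => v' (phi s) * (psi s - phi s)) (- delta phi) 0
  = - (RInt (fun s => v (psi s) - v (phi s) - v' (phi s) * (psi s - phi s)) (- delta phi) 0
       + RInt (fun s => v (psi s) - v (phi (- delta phi))) (- delta psi) (- delta phi)).
Proof.
  intros Hphi Hpsi.
  pose proof (delta_mem phi Hphi); pose proof (delta_mem psi Hpsi); pose proof zero_mem.
  assert (Cphi := in_C_clamped phi Hphi); assert (Cpsi := in_C_clamped psi Hpsi).
  assert (Cvphi := continuous_clamped_comp r v phi v_continuous Cphi).
  assert (Cvpsi := continuous_clamped_comp r v psi v_continuous Cpsi).
  assert (Cincr := continuous_clamped_minus r _ _ Cvpsi Cvphi).
  assert (Clin : continuous_clamped r (fun s => v' (phi s) * (psi s - phi s)))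
    by (apply continuous_clamped_mult;
        [apply continuous_clamped_comp | apply continuous_clamped_minus]; auto).
  assert (Htaylor : RInt (fun s => v (psi s) - v (phi s) - v' (phi s) * (psi s - phi s))
                      (- delta phi) 0
                    = RInt (fun s => v (psi s) - v (phi s)) (- delta phi) 0
                      - RInt (fun s => v' (phi s) * (psi s - phi s)) (- delta phi) 0)
    by (apply (RInt_minus (V := R_CompleteNormedModule)); apply ex_RInt_C; auto).
  assert (Hgap : RInt (fun s => v (psi s) - v (phi (- delta phi))) (- delta psi) (- delta phi)
                 = RInt (fun s => v (psi s)) (- delta psi) (- delta phi)
                   - (delta psi - delta phi) * v (phi (- delta phi))).
  { rewrite (RInt_minus (V := R_CompleteNormedModule));
      [| apply ex_RInt_C; auto | apply ex_RInt_const].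
    rewrite RInt_const. change (minus ?x (scal ?h ?c)) with (x - h * c). f_equal. ring. }
  rewrite Htaylor, Hgap, RInt_delta_gap by assumption. ring.
Qed.

Lemma delta_remainder_eq phi psi : in_C r phi -> in_C r psi ->
  delta psi - delta phi - Ddelta v v' delta phi (fun s => psi s - phi s)
  = - (RInt (fun s => v (psi s) - v (phi s) - v' (phi s) * (psi s - phi s)) (- delta phi) 0
       + RInt (fun s => v (psi s) - v (phi (- delta phi))) (- delta psi) (- delta phi))
    / v (phi (- delta phi)).
Proof.
  intros Hphi Hpsi. pose proof (v_ge_v0 (phi (- delta phi))).
  rewrite <- delta_increment by assumption. unfold Ddelta. field. lra.
Qed.

Lemma delta_remainder_le phi psi e K : in_C r phi -> in_C r psi ->
  (forall s, -r <= s <= 0 ->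
     Rabs (v (psi s) - v (phi s) - v' (phi s) * (psi s - phi s)) <= e * Rabs (psi s - phi s)) ->
  (forall s, Rmin (- delta psi) (- delta phi) <= s <= Rmax (- delta psi) (- delta phi) ->
     Rabs (v (psi s) - v (phi (- delta phi))) <= e) ->
  Rabs (delta psi - delta phi) <= K * normC r (fun s => psi s - phi s) ->
  Rabs (delta psi - delta phi - Ddelta v v' delta phi (fun s => psi s - phi s))
    <= (r + K) * e / v0 * normC r (fun s => psi s - phi s).
Proof.
  intros Hphi Hpsi Htaylor Hend Hlip.
  destruct (delta_spec phi Hphi) as [Hd _].
  pose proof (delta_mem phi Hphi); pose proof (delta_mem psi Hpsi); pose proof zero_mem.
  assert (Cphi := in_C_clamped phi Hphi); assert (Cpsi := in_C_clamped psi Hpsi).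
  assert (Cvphi := continuous_clamped_comp r v phi v_continuous Cphi).
  assert (Cvpsi := continuous_clamped_comp r v psi v_continuous Cpsi).
  assert (Cv'phi := continuous_clamped_comp r v' phi v'_continuous Cphi).
  set (n := normC r (fun s => psi s - phi s)) in *.
  assert (Hn0 : 0 <= n) by (apply normC_ge0; [lra | apply continuous_clamped_minus; assumption]).
  assert (He0 : 0 <= e).
  { apply Rle_trans with (Rabs (v (psi (- delta phi)) - v (phi (- delta phi))));
      [apply Rabs_pos | apply Hend; unfold Rmin, Rmax; destruct Rle_dec; lra]. }
  rewrite delta_remainder_eq by assumption.
  replace ((r + K) * e / v0 * n) with ((r + K) * e * n / v0) by (field; lra).
  apply abs_div_le; [exact v0_pos | apply v_ge_v0 |]. rewrite Rabs_Ropp.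
  eapply Rle_trans; [apply Rabs_triang|].
  assert (HR1 : Rabs (RInt (fun s => v (psi s) - v (phi s) - v' (phi s) * (psi s - phi s))
                        (- delta phi) 0) <= Rabs (0 - - delta phi) * (e * n)).
  { apply abs_RInt_le_dist.
    - apply ex_RInt_C; auto.
      apply continuous_clamped_minus; [apply continuous_clamped_minus; assumption|].
      apply continuous_clamped_mult; [|apply continuous_clamped_minus]; assumption.
    - intros s Hs. pose proof (delay_interval_mem phi s Hphi Hs) as Hs'.
      eapply Rle_trans; [apply Htaylor, Hs'|]. apply Rmult_le_compat_l; [exact He0|].
      apply abs_sub_le_normC; assumption. }
  assert (HR2 : Rabs (RInt (fun s => v (psi s) - v (phi (- delta phi))) (- delta psi) (- delta phi))
                <= Rabs (- delta phi - - delta psi) * e).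
  { apply abs_RInt_le_dist; [|exact Hend].
    apply ex_RInt_C; auto.
    apply continuous_clamped_minus; [exact Cvpsi | apply continuous_clamped_const]. }
  rewrite (Rabs_right (0 - - delta phi)) in HR1 by lra.
  replace (- delta phi - - delta psi) with (delta psi - delta phi) in HR2 by ring.
  assert (delta phi * (e * n) <= r * (e * n)) by (apply Rmult_le_compat_r; nra).
  assert (Rabs (delta psi - delta phi) * e <= K * n * e) by (apply Rmult_le_compat_r; lra).
  nra.
Qed.

Lemma abs_RInt_v'_diff_mul_le e phi psi chi : in_C r phi -> in_C r psi -> in_C r chi ->
  0 <= e -> (forall s, -r <= s <= 0 -> Rabs (v' (psi s) - v' (phi s)) <= e) ->
  Rabs (RInt (fun s => v' (psi s) * chi s - v' (phi s) * chi s) (- delta phi) 0)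
    <= r * (e * normC r chi).
Proof.
  intros Hphi Hpsi Hchi He0 Hv'.
  destruct (delta_spec phi Hphi) as [Hd _]; pose proof (delta_mem phi Hphi); pose proof zero_mem.
  assert (Cphi := in_C_clamped phi Hphi); assert (Cpsi := in_C_clamped psi Hpsi).
  assert (Cchi := in_C_clamped chi Hchi).
  assert (HN0 : 0 <= normC r chi) by (apply normC_ge0; [lra | exact Cchi]).
  apply Rle_trans with (Rabs (0 - - delta phi) * (e * normC r chi)); [apply abs_RInt_le_dist|].
  - apply ex_RInt_C; auto.
    apply continuous_clamped_minus; apply continuous_clamped_mult;
      [apply continuous_clamped_comp | | apply continuous_clamped_comp |]; auto.
  - intros s Hs. pose proof (delay_interval_mem phi s Hphi Hs) as Hs'.
    replace (v' (psi s) * chi s - v' (phi s) * chi s) with ((v' (psi s) - v' (phi s)) * chi s)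
      by ring.
    rewrite Rabs_mult. apply Rmult_le_compat; try apply Rabs_pos; [apply Hv', Hs'|].
    apply abs_le_normC; assumption.
  - rewrite Rabs_right by lra. apply Rmult_le_compat_r; [nra | lra].
Qed.

Lemma Ddelta_numerator_diff_le M L e phi psi chi :
  in_C r phi -> in_C r psi -> in_C r chi ->
  (forall x, -M <= x <= M -> Rabs (v' x) <= L) ->
  (forall t, -r <= t <= 0 -> -M <= phi t <= M /\ -M <= psi t <= M) ->
  Rabs (delta psi - delta phi) <= e ->
  (forall s, -r <= s <= 0 -> Rabs (v' (psi s) - v' (phi s)) <= e) ->
  Rabs (RInt (fun s => v' (phi s) * chi s) (- delta phi) 0
        - RInt (fun s => v' (psi s) * chi s) (- delta psi) 0)
    <= e * (L * normC r chi) + r * (e * normC r chi).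
Proof.
  intros Hphi Hpsi Hchi HL Hbd Hdelta Hv'.
  pose proof (delta_mem phi Hphi); pose proof (delta_mem psi Hpsi); pose proof zero_mem.
  assert (Cphi := in_C_clamped phi Hphi); assert (Cpsi := in_C_clamped psi Hpsi).
  assert (Cchi := in_C_clamped chi Hchi).
  assert (Cf : continuous_clamped r (fun s => v' (phi s) * chi s))
    by (apply continuous_clamped_mult; [apply continuous_clamped_comp|]; auto).
  assert (Cp : continuous_clamped r (fun s => v' (psi s) * chi s))
    by (apply continuous_clamped_mult; [apply continuous_clamped_comp|]; auto).
  set (N := normC r chi).
  assert (HN0 : 0 <= N) by (apply normC_ge0; [lra | exact Cchi]).
  assert (He0 : 0 <= e) by (eapply Rle_trans; [apply Rabs_pos | exact Hdelta]).
  assert (HL0 : 0 <= L) by (apply (abs_bound_nonneg v' M L (phi 0) HL), Hbd, zero_mem).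
  rewrite <- (RInt_Chasles (V := R_CompleteNormedModule)
                (fun s => v' (psi s) * chi s) (- delta psi) (- delta phi) 0)
    by (apply ex_RInt_C; auto).
  change (plus ?x ?y) with (x + y).
  assert (Hgap : Rabs (RInt (fun s => v' (psi s) * chi s) (- delta psi) (- delta phi))
                 <= e * (L * N)).
  { eapply Rle_trans.
    - apply (abs_RInt_v'_mul_le M); auto. intros; apply Hbd; assumption.
    - replace (- delta phi - - delta psi) with (delta psi - delta phi) by ring.
      apply Rmult_le_compat_r; [nra | exact Hdelta]. }
  assert (Hclose := abs_RInt_v'_diff_mul_le e phi psi chi Hphi Hpsi Hchi He0 Hv').
  rewrite (RInt_minus (V := R_CompleteNormedModule)) in Hclose by (apply ex_RInt_C; auto).
  change (minus ?x ?y) with (x - y) in Hclose. fold N in Hclose.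
  rewrite <- Rabs_Ropp.
  replace (- (_ - _)) with (RInt (fun s => v' (psi s) * chi s) (- delta psi) (- delta phi)
     + (RInt (fun s => v' (psi s) * chi s) (- delta phi) 0
        - RInt (fun s => v' (phi s) * chi s) (- delta phi) 0)) by ring.
  eapply Rle_trans; [apply Rabs_triang|]. lra.
Qed.

Lemma Ddelta_diff_le M L e phi psi chi : in_C r phi -> in_C r psi -> in_C r chi ->
  (forall x, -M <= x <= M -> Rabs (v' x) <= L) ->
  (forall t, -r <= t <= 0 -> -M <= phi t <= M /\ -M <= psi t <= M) ->
  Rabs (v (psi (- delta psi)) - v (phi (- delta phi))) <= e ->
  Rabs (delta psi - delta phi) <= e ->
  (forall s, -r <= s <= 0 -> Rabs (v' (psi s) - v' (phi s)) <= e) ->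
  Rabs (Ddelta v v' delta psi chi - Ddelta v v' delta phi chi)
    <= e * (r * L / (v0 * v0) + (L + r) / v0) * normC r chi.
Proof.
  intros Hphi Hpsi Hchi HL Hbd Hend Hdelta Hv'.
  assert (HAf := abs_Ddelta_numerator_le M L phi chi Hphi Hchi HL
                   (fun t Ht => proj1 (Hbd t Ht))).
  assert (Hdiff := Ddelta_numerator_diff_le M L e phi psi chi Hphi Hpsi Hchi HL Hbd Hdelta Hv').
  unfold Ddelta.
  set (Vp := v (psi (- delta psi))) in *; set (V0 := v (phi (- delta phi))) in *.
  set (Ap := RInt (fun s => v' (psi s) * chi s) (- delta psi) 0) in *.
  set (Af := RInt (fun s => v' (phi s) * chi s) (- delta phi) 0) in *.
  set (N := normC r chi) in *.
  assert (HVp : v0 <= Vp) by apply v_ge_v0; assert (HV0 : v0 <= V0) by apply v_ge_v0.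
  replace (- Ap / Vp - - Af / V0) with (Af * (Vp - V0) / (Vp * V0) + (Af - Ap) / Vp)
    by (field; lra).
  assert (HT1 : Rabs (Af * (Vp - V0) / (Vp * V0)) <= r * (L * N) * e / (v0 * v0)).
  { apply abs_div_le; [nra | apply Rmult_le_compat; lra |].
    rewrite Rabs_mult. apply Rmult_le_compat; try apply Rabs_pos; assumption. }
  assert (HT2 : Rabs ((Af - Ap) / Vp) <= (e * (L * N) + r * (e * N)) / v0)
    by (apply abs_div_le; assumption).
  eapply Rle_trans; [apply Rabs_triang|].
  replace (e * (r * L / (v0 * v0) + (L + r) / v0) * N)
    with (r * (L * N) * e / (v0 * v0) + (e * (L * N) + r * (e * N)) / v0) by (field; lra).
  lra.
Qed.

Section NearPhi.

Variables (phi : R -> R) (L : R).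
Hypothesis phi_in_C : in_C r phi.
Let M := normC r phi + 1.
Hypothesis v'_bound : forall x, -M <= x <= M -> Rabs (v' x) <= L.

Lemma phi_bounded t : -r <= t <= 0 -> -M <= phi t <= M.
Proof.
  intros Ht. apply Rabs_le_between. unfold M.
  pose proof (abs_le_normC r phi t (in_C_clamped phi phi_in_C) Ht). lra.
Qed.

Lemma near_values_bounded :
  near_C r phi (fun psi => forall t, -r <= t <= 0 -> -M <= phi t <= M /\ -M <= psi t <= M).
Proof.
  exists 1; split; [lra|]. intros psi Hpsi Hn t Ht. split; [apply phi_bounded, Ht|].
  assert (Hdiff := abs_sub_le_normC phi psi t phi_in_C Hpsi Ht).
  pose proof (abs_le_normC r phi t (in_C_clamped phi phi_in_C) Ht).
  apply Rabs_le_between in Hdiff. apply Rabs_le_between in H. unfold M. lra.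
Qed.

Lemma L_nonneg : 0 <= L.
Proof. apply (abs_bound_nonneg v' M L (phi 0) v'_bound), phi_bounded, zero_mem. Qed.

Lemma v_lipschitz x y : -M <= x <= M -> -M <= y <= M -> Rabs (v x - v y) <= L * Rabs (x - y).
Proof.
  intros Hx Hy. apply (lipschitz_of_derive_bound v v' v_derive).
  intros c Hc. apply v'_bound, (between_mem _ _ x y c); assumption.
Qed.

Lemma near_delta_lipschitz :
  near_C r phi (fun psi => Rabs (delta psi - delta phi)
                           <= r * L / v0 * normC r (fun s => psi s - phi s)).
Proof.
  apply (near_C_impl _ _ _ _ near_values_bounded). intros psi Hpsi Hbd.
  apply (delta_lipschitz M); assumption.
Qed.

Lemma near_delta e : 0 < e -> near_C r phi (fun psi => Rabs (delta psi - delta phi) <= e).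
Proof.
  intros He. set (K := r * L / v0).
  assert (HK : 0 <= K).
  { unfold K. pose proof r_pos; pose proof L_nonneg.
    apply Rmult_le_pos; [nra | left; apply Rinv_0_lt_compat, v0_pos]. }
  assert (HeK : 0 < e / (K + 1)) by (apply Rdiv_lt_0_compat; lra).
  apply (near_C_impl _ _ _ _
           (near_C_and _ _ _ _ near_delta_lipschitz (near_C_ball r phi _ HeK))).
  intros psi _ [Hlip Hn]. fold K in Hlip.
  apply Rle_trans with (K * (e / (K + 1))); [|apply Rmult_le_reg_r with (K + 1); [lra|];
                                              field_simplify; nra].
  eapply Rle_trans; [exact Hlip|]. apply Rmult_le_compat_l; lra.
Qed.

Lemma near_v_endpoint e : 0 < e ->
  near_C r phi (fun psi => forall s,
    Rmin (- delta psi) (- delta phi) <= s <= Rmax (- delta psi) (- delta phi) ->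
    Rabs (v (psi s) - v (phi (- delta phi))) <= e).
Proof.
  intros He. pose proof L_nonneg as HL0.
  set (e' := e / (2 * (L + 1))).
  assert (He' : 0 < e') by (unfold e'; apply Rdiv_lt_0_compat; lra).
  assert (HLe' : 2 * L * e' <= e).
  { unfold e'. apply Rmult_le_reg_r with (2 * (L + 1)); [lra|]. field_simplify; nra. }
  destruct (phi_in_C (- delta phi) (delta_mem phi phi_in_C) e' He') as [dp [Hdp Hphi_cont]].
  apply (near_C_impl _ _ _ _
           (near_C_and _ _ _ _ near_values_bounded
              (near_C_and _ _ _ _ (near_delta (dp / 2) ltac:(lra)) (near_C_ball r phi e' He')))).
  intros psi Hpsi [Hbd [Hdelta Hn]] s Hs.
  pose proof (delta_mem phi phi_in_C); pose proof (delta_mem psi Hpsi).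
  assert (Hs' : -r <= s <= 0) by (apply (between_mem _ _ (- delta psi) (- delta phi) s);
                                  assumption).
  assert (Hnear_s : Rabs (phi s - phi (- delta phi)) < e').
  { apply Hphi_cont; [exact Hs'|]. eapply Rle_lt_trans; [apply (between_dist _ _ _ Hs)|].
    replace (- delta psi - - delta phi) with (- (delta psi - delta phi)) by ring.
    rewrite Rabs_Ropp. lra. }
  assert (Hpsi_s : Rabs (psi s - phi s) < e')
    by (eapply Rle_lt_trans; [apply abs_sub_le_normC | exact Hn]; assumption).
  destruct (Hbd s Hs'), (Hbd (- delta phi) ltac:(assumption)).
  replace (v (psi s) - v (phi (- delta phi)))
    with ((v (psi s) - v (phi s)) + (v (phi s) - v (phi (- delta phi)))) by ring.
  eapply Rle_trans; [apply Rabs_triang|].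
  pose proof (v_lipschitz (psi s) (phi s) ltac:(assumption) ltac:(assumption)).
  pose proof (v_lipschitz (phi s) (phi (- delta phi)) ltac:(assumption) ltac:(assumption)).
  assert (L * Rabs (psi s - phi s) <= L * e') by (apply Rmult_le_compat_l; lra).
  assert (L * Rabs (phi s - phi (- delta phi)) <= L * e') by (apply Rmult_le_compat_l; lra).
  lra.
Qed.

Lemma near_v'_close e : 0 < e ->
  near_C r phi (fun psi => forall s, -r <= s <= 0 -> Rabs (v' (psi s) - v' (phi s)) <= e).
Proof.
  intros He. destruct (uniform_continuity_segment v' M e v'_continuous He) as [du [Hdu Hunif]].
  apply (near_C_impl _ _ _ _ (near_C_and _ _ _ _ near_values_bounded (near_C_ball r phi du Hdu))).
  intros psi Hpsi [Hbd Hn] s Hs. destruct (Hbd s Hs).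
  left. apply Hunif; try assumption.
  eapply Rle_lt_trans; [apply abs_sub_le_normC | exact Hn]; assumption.
Qed.

Lemma near_taylor e : 0 < e ->
  near_C r phi (fun psi => forall s, -r <= s <= 0 ->
    Rabs (v (psi s) - v (phi s) - v' (phi s) * (psi s - phi s)) <= e * Rabs (psi s - phi s)).
Proof.
  intros He. destruct (uniform_continuity_segment v' M e v'_continuous He) as [du [Hdu Hunif]].
  apply (near_C_impl _ _ _ _ (near_C_and _ _ _ _ near_values_bounded (near_C_ball r phi du Hdu))).
  intros psi Hpsi [Hbd Hn] s Hs. destruct (Hbd s Hs).
  apply (taylor1_remainder_le v v' v_derive). intros c Hc.
  left. apply Hunif; [apply (between_mem _ _ (psi s) (phi s) c); assumption | assumption |].
  eapply Rle_lt_trans; [apply (between_dist _ _ _ Hc)|].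
  eapply Rle_lt_trans; [apply abs_sub_le_normC | exact Hn]; assumption.
Qed.

Lemma delta_frechet_near eps : 0 < eps ->
  near_C r phi (fun psi =>
    Rabs (delta psi - delta phi - Ddelta v v' delta phi (fun s => psi s - phi s))
      <= eps * normC r (fun s => psi s - phi s)).
Proof.
  intros Heps. pose proof r_pos; pose proof L_nonneg.
  set (K := r * L / v0).
  assert (HK : 0 <= K)
    by (unfold K; apply Rmult_le_pos; [nra | left; apply Rinv_0_lt_compat, v0_pos]).
  set (e := eps * v0 / (r + K)).
  assert (He : 0 < e) by (unfold e; apply Rdiv_lt_0_compat; nra).
  apply (near_C_impl _ _ _ _
           (near_C_and _ _ _ _ (near_taylor e He)
              (near_C_and _ _ _ _ (near_v_endpoint e He) near_delta_lipschitz))).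
  intros psi Hpsi [Htaylor [Hend Hlip]].
  replace eps with ((r + K) * e / v0) by (unfold e; field; lra).
  apply delta_remainder_le; assumption.
Qed.

Lemma Ddelta_continuous_near eps : 0 < eps ->
  near_C r phi (fun psi => forall chi, in_C r chi ->
    Rabs (Ddelta v v' delta psi chi - Ddelta v v' delta phi chi) <= eps * normC r chi).
Proof.
  intros Heps. pose proof r_pos; pose proof L_nonneg.
  set (K := r * L / (v0 * v0) + (L + r) / v0).
  assert (HK : 0 <= K).
  { unfold K. apply Rplus_le_le_0_compat; apply Rmult_le_pos;
      try (left; apply Rinv_0_lt_compat); nra. }
  set (e := eps / (K + 1)).
  assert (He : 0 < e) by (unfold e; apply Rdiv_lt_0_compat; lra).
  apply (near_C_impl _ _ _ _
           (near_C_and _ _ _ _ near_values_bounded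
              (near_C_and _ _ _ _ (near_v_endpoint e He)
                 (near_C_and _ _ _ _ (near_delta e He) (near_v'_close e He))))).
  intros psi Hpsi [Hbd [Hend [Hdelta Hv']]] chi Hchi.
  assert (HN0 : 0 <= normC r chi) by (apply normC_ge0; [lra | apply in_C_clamped, Hchi]).
  eapply Rle_trans; [apply (Ddelta_diff_le M L e); try assumption|].
  - apply Hend. unfold Rmin, Rmax; destruct Rle_dec; lra.
  - apply Rmult_le_compat_r; [exact HN0|]. fold K.
    unfold e. apply Rmult_le_reg_r with (K + 1); [lra|]. field_simplify; nra.
Qed.

End NearPhi.

Lemma Ddelta_bounded phi : in_C r phi ->
  exists K, forall chi, in_C r chi -> Rabs (Ddelta v v' delta phi chi) <= K * normC r chi.
Proof.
  intros Hphi. destruct (bounded_segment v' (normC r phi + 1) v'_continuous) as [L HL].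
  exists (r * L / v0). intros chi Hchi.
  apply (Ddelta_abs_le (normC r phi + 1)); try assumption.
  apply phi_bounded, Hphi.
Qed.

Lemma delta_frechet phi : in_C r phi ->
  forall eps, 0 < eps -> exists d, 0 < d /\
    forall chi, in_C r chi -> normC r chi < d ->
      Rabs (delta (fun s => phi s + chi s) - delta phi - Ddelta v v' delta phi chi)
        <= eps * normC r chi.
Proof.
  intros Hphi eps Heps.
  destruct (bounded_segment v' (normC r phi + 1) v'_continuous) as [L HL].
  destruct (delta_frechet_near phi L Hphi HL eps Heps) as [d [Hd Hfrechet]].
  exists d; split; [exact Hd|]. intros chi Hchi Hn.
  assert (Hpsi : in_C r (fun s => phi s + chi s))
    by (apply continuous_clamped_in_C, continuous_clamped_plus; apply in_C_clamped; assumption).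
  assert (Hincr : forall s, -r <= s <= 0 -> phi s + chi s - phi s = chi s) by (intros; ring).
  rewrite <- (normC_ext r _ _ Hincr) in Hn |- *.
  rewrite <- (Ddelta_ext phi _ _ Hphi Hincr).
  exact (Hfrechet _ Hpsi Hn).
Qed.

Lemma Ddelta_continuous phi : in_C r phi -> forall eps, 0 < eps ->
  near_C r phi (fun psi => forall chi, in_C r chi ->
    Rabs (Ddelta v v' delta psi chi - Ddelta v v' delta phi chi) <= eps * normC r chi).
Proof.
  intros Hphi eps Heps.
  destruct (bounded_segment v' (normC r phi + 1) v'_continuous) as [L HL].
  exact (Ddelta_continuous_near phi L Hphi HL eps Heps).
Qed.

Section ConstantInitialFunction.

Variables (phi : R -> R) (xi : R).
Hypothesis phi_in_C : in_C r phi.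
Hypothesis phi_const : forall s, -r <= s <= 0 -> phi s = xi.

Lemma phi_const_on_delay s : - delta phi <= s <= 0 -> phi s = xi.
Proof. intros Hs. apply phi_const. pose proof (delta_mem phi phi_in_C). lra. Qed.

Lemma delta_const : delta phi = a / v xi.
Proof.
  destruct (delta_spec phi phi_in_C) as [Hd Hint].
  assert (Hvxi : 0 < v xi) by (pose proof (v_ge_v0 xi); lra).
  rewrite (RInt_ext _ (fun _ => v xi)), RInt_const in Hint.
  - change (scal ?h ?c) with (h * c) in Hint. rewrite Hint. field. lra.
  - intros s Hs. rewrite phi_const_on_delay; [reflexivity|].
    rewrite Rmin_left, Rmax_right in Hs; lra.
Qed.

Lemma Ddelta_const chi : in_C r chi ->
  Ddelta v v' delta phi chi = - (v' xi / v xi) * RInt chi (- (a / v xi)) 0.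
Proof.
  intros Hchi. pose proof (delta_mem phi phi_in_C); pose proof zero_mem.
  assert (Hvxi : 0 < v xi) by (pose proof (v_ge_v0 xi); lra).
  unfold Ddelta. rewrite <- delta_const, phi_const_on_delay by lra.
  rewrite (RInt_ext _ (fun s => scal (v' xi) (chi s))).
  - rewrite (RInt_scal (V := R_CompleteNormedModule)) by (apply ex_RInt_C; auto using in_C_clamped).
    change (scal ?l ?x) with (l * x). field. lra.
  - intros s Hs. rewrite phi_const_on_delay; [reflexivity|].
    pose proof (delta_spec phi phi_in_C).
    rewrite Rmin_left, Rmax_right in Hs; lra.
Qed.

End ConstantInitialFunction.

End StateDependentDelay.

Theorem proposition2p1
  (a v0 r : R) (v v' : R -> R) (delta : (R -> R) -> R)
  (Ha : 0 < a) (Hv0 : 0 < v0)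
  (Hvlb : forall x, v0 <= v x)
  (Hvder : forall x, is_derive v x (v' x))
  (Hv'cont : forall x, continuous v' x)
  (Hr : a / v0 < r)
  (Hdelta : forall phi, in_C r phi ->
     0 < delta phi < r /\ a = RInt (fun s => v (phi s)) (- delta phi) 0) :
  (* delta is Frechet differentiable on C with derivative Ddelta phi,
     a bounded linear functional *)
  (forall phi, in_C r phi ->
     (exists M, forall chi, in_C r chi ->
        Rabs (Ddelta v v' delta phi chi) <= M * normC r chi) /\
     (forall eps, 0 < eps -> exists d, 0 < d /\
        forall chi, in_C r chi -> normC r chi < d ->
          Rabs (delta (fun s => phi s + chi s) - delta phi
                - Ddelta v v' delta phi chi) <= eps * normC r chi)) /\
  (* the derivative phi |-> Ddelta phi is continuous in operator norm *)
  (forall phi, in_C r phi ->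
     forall eps, 0 < eps -> exists d, 0 < d /\
       forall psi, in_C r psi -> normC r (fun s => psi s - phi s) < d ->
         forall chi, in_C r chi ->
           Rabs (Ddelta v v' delta psi chi - Ddelta v v' delta phi chi)
             <= eps * normC r chi) /\
  (* the constant case *)
  (forall phi xi, in_C r phi -> (forall s, -r <= s <= 0 -> phi s = xi) ->
     delta phi = a / v xi /\
     forall chi, in_C r chi ->
       Ddelta v v' delta phi chi
         = - (v' xi / v xi) * RInt chi (- (a / v xi)) 0).
Proof.
  split; [|split].
  - intros phi Hphi. split.
    + eapply Ddelta_bounded; eassumption.
    + eapply delta_frechet; eassumption.
  - eapply Ddelta_continuous; eassumption.
  - intros phi xi Hphi Hconst. split.
    + eapply delta_const; eassumption.
    + intros chi Hchi. eapply Ddelta_const; eassumption.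
Qed.
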